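(* Let $n>3$ and let $a<b<c$ be elements of $\mathcal{C}_n$. Then the triangle $\triangle^{(n)}\{a,b,c\}$ has at least one right identity and has no left identity.
   Context: $\mathcal{C}_n=\{0,1,\dots,n-1\}$ with its usual order; $\widehat{\mathcal{E}}_{\mathcal{C}_n}$ is the set of all order-preserving maps $\mathcal{C}_n\to\mathcal{C}_n$ (not required to fix $0$), a semiring with $(\alpha+\beta)(x)=\max(\alpha(x),\beta(x))$ and $(\alpha\cdot\beta)(x)=\beta(\alpha(x))$. The triangle $\triangle^{(n)}\{a,b,c\}$ is the subsemiring of all $\alpha\in\widehat{\mathcal{E}}_{\mathcal{C}_n}$ with image contained in $\{a,b,c\}$. A right (resp. left) identity of a semiring $R$ is $e\in R$ with $xe=x$ (resp. $ex=x$) for all $x\in R$. *)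

From mathcomp Require Import all_boot.
Set Implicit Arguments. Unset Strict Implicit. Unset Printing Implicit Defensive.

(* C_n = 'I_n with its usual order; maps C_n -> C_n are finite functions. *)
Definition emap (n : nat) := {ffun 'I_n -> 'I_n}.

(* order-preserving maps (not required to fix 0) *)
Definition order_preserving n (f : emap n) : bool :=
  [forall x : 'I_n, forall y : 'I_n, (x <= y) ==> (f x <= f y)].

Definition Ehat n : {set emap n} := [set f | order_preserving f].

Definition sadd n (al be : emap n) : emap n :=
  [ffun x => if al x <= be x then be x else al x].
Definition smul n (al be : emap n) : emap n := [ffun x => be (al x)].

Definition triangle n (a b c : 'I_n) : {set emap n} :=
  [set f in Ehat n | [forall x, f x \in [:: a; b; c]]].

Definition is_right_identity n (R : {set emap n}) (e : emap n) : Prop :=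
  e \in R /\ forall x, x \in R -> smul x e = x.
Definition is_left_identity n (R : {set emap n}) (e : emap n) : Prop :=
  e \in R /\ forall x, x \in R -> smul e x = x.

(* Rounding up to the next point of {a, b, c} is order-preserving, fixes a, b
   and c, and so acts as a right identity on maps with image in {a, b, c}.
   A left identity e would satisfy f (e y) = f y for every f in the triangle;
   the two-valued threshold maps separate points, so e would be the identity.
   But e has image in {a, b, c}, which misses a point of C_n when n > 3. *)

From mathcomp Require Import all_boot.
From mathcomp Require Import zify.

Definition round_up {n} (a b c : 'I_n) : emap n :=
  [ffun y : 'I_n => if y <= a then a else if y <= b then b else c].

Definition threshold {n} (a b k : 'I_n) : emap n :=
  [ffun t : 'I_n => if t <= k then a else b].

Section Triangle.

Context {n : nat} {a b c : 'I_n}.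

Lemma triangle_range {f : emap n} x :
  f \in triangle a b c -> f x \in [:: a; b; c].
Proof. by rewrite inE => /andP[_ /forallP]. Qed.

Lemma triangleI (f : emap n) :
  {homo f : x y / x <= y} -> (forall x, f x \in [:: a; b; c]) ->
  f \in triangle a b c.
Proof.
move=> mono range; rewrite !inE; apply/andP; split; last exact/forallP.
by apply/forallP=> x; apply/forallP=> y; apply/implyP; apply: mono.
Qed.

Hypothesis lt_ab : a < b.

Lemma threshold_in_triangle k : threshold a b k \in triangle a b c.
Proof.
apply: triangleI => [x y le_xy|x]; rewrite !ffunE.
  by do ![case: ifP]; lia.
by case: ifP; rewrite !inE eqxx ?orbT.
Qed.

Lemma threshold_separates {y z : 'I_n} :
  y != z -> exists k, threshold a b k y != threshold a b k z.
Proof.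
move=> ne_yz; exists (if y <= z then y else z).
rewrite -val_eqE /= !ffunE; move: ne_yz lt_ab; rewrite -!val_eqE /=.
by do ![case: ifP]; lia.
Qed.

Lemma left_identity_id {e : emap n} :
  is_left_identity (triangle a b c) e -> forall y, e y = y.
Proof.
case=> _ e_left y; apply/eqP; apply: contraT => ne_ey.
have [k] := threshold_separates ne_ey.
have /ffunP/(_ y) := e_left _ (threshold_in_triangle k).
by rewrite ffunE => ->; rewrite eqxx.
Qed.

Hypothesis lt_bc : b < c.

Lemma round_up_in_triangle : round_up a b c \in triangle a b c.
Proof.
apply: triangleI => [x y le_xy|x]; rewrite !ffunE.
  by do ![case: ifP]; lia.
by do ![case: ifP]; rewrite !inE eqxx ?orbT.
Qed.

Lemma round_up_fixed x : x \in [:: a; b; c] -> round_up a b c x = x.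
Proof.
by rewrite ffunE !inE => /or3P[] /eqP ->; do ![case: ifP => ?] => //; lia.
Qed.

Lemma round_up_right_identity : is_right_identity (triangle a b c) (round_up a b c).
Proof.
split; first exact: round_up_in_triangle.
move=> f f_tri; apply/ffunP=> x; rewrite ffunE.
exact/round_up_fixed/triangle_range.
Qed.

End Triangle.

Lemma exists_ord_notin {n} (s : seq 'I_n) : size s < n -> exists y, y \notin s.
Proof.
move=> lt_s_n; apply/existsP; apply: contraLR lt_s_n.
rewrite negb_exists -leqNgt => /forallP all_in.
apply: leq_trans (card_size s); rewrite -[X in X <= _]card_ord.
by apply/subset_leq_card/subsetP => y _; have := all_in y; rewrite negbK.
Qed.

Theorem proposition24 (n : nat) (a b c : 'I_n) :
  3 < n -> a < b -> b < c ->
  (exists e, is_right_identity (triangle a b c) e) /\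
  ~ (exists e, is_left_identity (triangle a b c) e).
Proof.
move=> n_gt3 lt_ab lt_bc; split.
  by exists (round_up a b c); apply: round_up_right_identity.
case=> e e_left; have [y] := exists_ord_notin [:: a; b; c] n_gt3.
by rewrite -(left_identity_id lt_ab e_left y) (triangle_range y e_left.1).
Qed.
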